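(* $\mathrm{co}\text{-}\mathrm{CFL}\not\subseteq\mathrm{CFL}/n$. Equivalently, $\mathrm{co}\text{-}\mathrm{CFL}/n\neq\mathrm{CFL}/n$.
   Context: $\mathrm{CFL}$ is the family of context-free languages, and $\mathrm{co}\text{-}\mathrm{CFL}$ is the family of all languages whose complements (with respect to their alphabet) are context-free. An advice function is a map $h:\mathbb{N}\to\Gamma^*$, for some alphabet $\Gamma$, with $|h(n)|=n$ for all $n$. For strings $x=x_1\cdots x_n$ and $w=\sigma_1\cdots\sigma_n$ of the same length, $\begin{bmatrix}x\\ w\end{bmatrix}$ denotes the string $\begin{bmatrix}x_1\\ \sigma_1\end{bmatrix}\cdots\begin{bmatrix}x_n\\ \sigma_n\end{bmatrix}$ over the product alphabet of pairs of symbols. For a family $\mathcal{C}$ of languages, $\mathcal{C}/n$ is the family of all languages $L$ over an alphabet $\Sigma$ for which there exist an advice function $h$ and a language $L'\in\mathcal{C}$ such that for all $x\in\Sigma^*$: $x\in L$ iff $\begin{bmatrix}x\\ h(|x|)\end{bmatrix}\in L'$. *)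

From mathcomp Require Import all_boot.
Set Implicit Arguments. Unset Strict Implicit. Unset Printing Implicit Defensive.

Definition language (Sigma : Type) := seq Sigma -> Prop.

Record cfg (N Sigma : finType) := CFG {
  rules : seq (N * seq (N + Sigma));
  start : N
}.

Inductive cfg_step (N Sigma : finType) (G : cfg N Sigma) :
  seq (N + Sigma) -> seq (N + Sigma) -> Prop :=
| CfgStep (u v : seq (N + Sigma)) (A : N) (r : seq (N + Sigma)) :
    (A, r) \in rules G -> cfg_step G (u ++ inl A :: v) (u ++ r ++ v).

Inductive cfg_derives (N Sigma : finType) (G : cfg N Sigma) :
  seq (N + Sigma) -> seq (N + Sigma) -> Prop :=
| DerRefl s : cfg_derives G s s
| DerStep s t u : cfg_step G s t -> cfg_derives G t u -> cfg_derives G s u.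

Definition cfg_lang (N Sigma : finType) (G : cfg N Sigma) : language Sigma :=
  fun w => cfg_derives G [:: inl (start G)] (map inr w).

Definition is_CFL (Sigma : finType) (L : language Sigma) : Prop :=
  exists (N : finType) (G : cfg N Sigma), forall w, L w <-> cfg_lang G w.

Definition is_coCFL (Sigma : finType) (L : language Sigma) : Prop :=
  is_CFL (fun w => ~ L w).

Definition advice (Gamma : Type) (h : nat -> seq Gamma) : Prop :=
  forall n, size (h n) = n.

Definition with_advice
  (C : forall T : finType, language T -> Prop)
  (Sigma : finType) (L : language Sigma) : Prop :=
  exists (Gamma : finType) (h : nat -> seq Gamma) (L' : language (Sigma * Gamma)%type),
    advice h /\ C _ L' /\
    forall x : seq Sigma, L x <-> L' (zip x (h (size x))).

Definition in_CFL_n (Sigma : finType) (L : language Sigma) : Prop :=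
  with_advice (@is_CFL) L.

From mathcomp Require Import all_boot zify.
From Stdlib Require Import Classical ClassicalEpsilon.
Set Implicit Arguments. Unset Strict Implicit. Unset Printing Implicit Defensive.

(* The words [y ++ z] where [y] has [false] and [z] has [true] at its centre
   form a context-free language, and a word [x] of length [k + k] belongs to
   it iff [x_p = false] and [x_(p + k) = true] for some [p < k]; in particular
   no square [w ++ w] does.  Suppose a grammar [G] with advice [a] decides the
   complement.  Then [G] derives every [zip (w ++ w) a] with [size w = k], and
   each derivation tree has a subtree whose yield is a window of length
   between [l] and [k = c * l], [c] bounding the right-hand sides of [G].
   Two words with the same window position, length and root nonterminal may
   exchange these subtrees, so both splices stay outside the language; as the
   window meets every pair [{q, q + k}] at most once, this forces the words to
   agree on the first [l] positions of the window (mod [k]).  Hence a word is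
   determined by its window data and [k - l] further letters, which gives
   [2 ^ l <= (k + k).+1 ^ 2 * #|N|], false for large [l]. *)

Section DerivationTrees.
Variables (N Sigma : finType) (G : cfg N Sigma).

Inductive gen : N -> seq Sigma -> Prop :=
| Gen A r w : (A, r) \in rules G -> gens r w -> gen A w
with gens : seq (N + Sigma) -> seq Sigma -> Prop :=
| GensNil : gens [::] [::]
| GensT a r w : gens r w -> gens (inr a :: r) (a :: w)
| GensN A r w1 w2 : gen A w1 -> gens r w2 -> gens (inl A :: r) (w1 ++ w2).

Scheme gen_mut := Induction for gen Sort Prop
with gens_mut := Induction for gens Sort Prop.

Lemma gens_cat r1 r2 w1 w2 :
  gens r1 w1 -> gens r2 w2 -> gens (r1 ++ r2) (w1 ++ w2).
Proof.
elim=> [|a r w _ IH|A r u1 u2 g _ IH] H2 //=; first exact/GensT/IH.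
by rewrite -catA; apply: GensN => //; apply: IH.
Qed.

Lemma gens_catP r1 r2 w : gens (r1 ++ r2) w ->
  exists w1 w2, [/\ w = w1 ++ w2, gens r1 w1 & gens r2 w2].
Proof.
elim: r1 w => [|x r1 IH] w /= H; first by exists [::], w; split => //; apply: GensNil.
inversion H; subst.
- have [w1 [w2 [-> Hr1 Hr2]]] := IH _ H3.
  by exists (a :: w1), w2; split => //; apply: GensT.
- have [u1 [u2 [-> Hr1 Hr2]]] := IH _ H4.
  by exists (w1 ++ u1), u2; rewrite catA; split => //; apply: GensN.
Qed.

Lemma gens_terminals w : gens (map inr w) w.
Proof. by elim: w => [|a w IH] /=; [apply: GensNil | apply: GensT]. Qed.

Lemma derives_trans s t u :
  cfg_derives G s t -> cfg_derives G t u -> cfg_derives G s u.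
Proof. by elim=> [//|s0 t0 u0 H _ IH] /IH; apply: DerStep. Qed.

Lemma derives_context x y s t :
  cfg_derives G s t -> cfg_derives G (x ++ s ++ y) (x ++ t ++ y).
Proof.
elim=> [s0|s0 t0 u0 [u v A r Hr] _ IH]; first exact: DerRefl.
apply: DerStep IH.
by have := CfgStep (x ++ u) (v ++ y) Hr; rewrite -!catA.
Qed.

Lemma derives_gens s w : cfg_derives G s (map inr w) -> gens s w.
Proof.
move e: (map inr w) => t H; elim: H w e => [s0|s0 t0 u0 [u v A r Hr] _ IH] w e.
  by subst; apply: gens_terminals.
have [w1 [w23 [-> H1 /gens_catP [w2 [w3 [-> H2 H3]]]]]] := gens_catP (IH w e).
by apply: gens_cat => //; apply: GensN => //; apply: Gen Hr H2.
Qed.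

Lemma gen_derives A w : gen A w -> cfg_derives G [:: inl A] (map inr w).
Proof.
move=> H.
apply: (@gen_mut (fun A w _ => cfg_derives G [:: inl A] (map inr w))
                 (fun r w _ => cfg_derives G r (map inr w))) H.
- move=> B r w0 Hr _; apply: DerStep.
  by have := @CfgStep _ _ G [::] [::] B r Hr; rewrite cats0.
- exact: DerRefl.
- move=> a r w0 _ /(derives_context [:: inr a] [::]).
  by rewrite !cats0.
- move=> B r w1 w2 _ /(derives_context [::] r) IH1 _ IH2; rewrite map_cat.
  apply: derives_trans IH1 _.
  by have := derives_context (map inr w1) [::] IH2; rewrite !cats0.
Qed.

Lemma gen_start_lang w : gen (start G) w <-> cfg_lang G w.
Proof.
split; first exact: gen_derives.
move=> /derives_gens H; inversion H; subst.
by inversion H4; subst; rewrite cats0.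
Qed.

Definition max_rhs_size := \max_(p <- rules G) size p.2.

Lemma rhs_size_max A r : (A, r) \in rules G -> size r <= max_rhs_size.
Proof. by move=> Hr; rewrite /max_rhs_size (big_rem _ Hr) leq_maxl. Qed.

Definition splits_at_subtree l w (P : seq Sigma -> Prop) :=
  exists u y v B, [/\ w = u ++ y ++ v, l <= size y <= max_rhs_size.+1 * l,
    gen B y & forall y', gen B y' -> P (u ++ y' ++ v)].

(* Descend from the root while the yield exceeds [max_rhs_size.+1 * l]: such
   a node has at most [max_rhs_size] children, so one of them still has a
   yield of length at least [l]. *)
Lemma gen_splits_at_subtree l A w :
  0 < l -> gen A w -> l <= size w -> splits_at_subtree l w (gen A).
Proof.
move=> l_gt0 H.
apply: (@gen_mut (fun A w _ => l <= size w -> splits_at_subtree l w (gen A))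
                 (fun r w _ => size r * l < size w -> splits_at_subtree l w (gens r))) H.
- move=> B r w0 Hr Hg IH Hl.
  case: (leqP (size w0) (max_rhs_size.+1 * l)) => Hw0.
    exists [::], w0, [::], B; rewrite cats0 Hl Hw0; split => // [|y'].
      exact: Gen Hr Hg.
    by rewrite cats0.
  have [|u [y [v [C [-> Hy HC HP]]]]] := IH _.
    apply: leq_ltn_trans Hw0; rewrite leq_mul2r; apply/orP; right.
    exact: leqW (rhs_size_max Hr).
  by exists u, y, v, C; split => // y' /HP; apply: Gen Hr.
- by [].
- move=> a r w0 _ IH /= Hl.
  have [|u [y [v [C [-> Hy HC HP]]]]] := IH _; first by rewrite mulSn in Hl; lia.
  by exists (a :: u), y, v, C; split => // y' /HP; apply: GensT.
- move=> B r w1 w2 Hg1 IH1 Hg2 IH2 /= Hl; rewrite size_cat mulSn in Hl.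
  case: (leqP l (size w1)) => Hw1.
    have [u [y [v [C [-> Hy HC HP]]]]] := IH1 Hw1.
    exists u, y, (v ++ w2), C; rewrite -!catA; split => // y' /HP Hg.
    by rewrite !catA -(catA u); apply: GensN.
  have [|u [y [v [C [-> Hy HC HP]]]]] := IH2 _; first lia.
  exists (w1 ++ u), y, v, C; rewrite -!catA; split => // y' /HP.
  by rewrite -catA; apply: GensN.
Qed.

End DerivationTrees.

Definition centered (c : bool) (w : seq bool) :=
  exists u v, size u = size v /\ w = u ++ c :: v.

Definition centered_pair (x : seq bool) :=
  exists y z, [/\ x = y ++ z, centered false y & centered true z].

Local Notation nonterminal := (bool * bool)%type.

Definition ntS : nonterminal := (false, false).
Definition ntA : nonterminal := (false, true).
Definition ntB : nonterminal := (true, false).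
Definition ntX : nonterminal := (true, true).

Definition centered_pair_cfg : cfg nonterminal bool := CFG
  [:: (ntS, [:: inl ntA; inl ntB]);
      (ntA, [:: inr false]); (ntA, [:: inl ntX; inl ntA; inl ntX]);
      (ntB, [:: inr true]);  (ntB, [:: inl ntX; inl ntB; inl ntX]);
      (ntX, [:: inr false]); (ntX, [:: inr true])] ntS.

Definition nt_lang (n : nonterminal) : language bool :=
  match n with
  | (false, false) => centered_pair
  | (false, true) => centered false
  | (true, false) => centered true
  | (true, true) => fun w => size w = 1
  end.

Fixpoint rhs_lang (r : seq (nonterminal + bool)) (w : seq bool) : Prop :=
  match r with
  | [::] => w = [::]
  | inr a :: r' => exists2 w', w = a :: w' & rhs_lang r' w'
  | inl n :: r' => exists w1 w2, [/\ w = w1 ++ w2, nt_lang n w1 & rhs_lang r' w2]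
  end.

Lemma centered_wrap c a b w : centered c w -> centered c (a :: w ++ [:: b]).
Proof.
case=> u [v [Hs ->]]; exists (a :: u), (rcons v b).
by rewrite /= size_rcons Hs -cats1 -catA.
Qed.

Lemma centered_pair_cfg_rule_sound n r w :
  (n, r) \in rules centered_pair_cfg -> rhs_lang r w -> nt_lang n w.
Proof.
rewrite !inE; do ![case/orP=> [/eqP[-> ->]|] | move/eqP=> [-> ->]] => /=;
  try by case=> _ -> ->; try exists [::], [::].
(* Left: [S -> A B] and the two rules [C -> X C X]. *)
1: by case=> y [_ [-> Hy [z [_ [-> Hz ->]]]]]; exists y, z; rewrite cats0.
all: case=> [a [_ [-> Ha [y [_ [-> Hy [b [_ [-> Hb ->]]]]]]]]].
all: case: a Ha => [|a [|]] // _; case: b Hb => [|b [|]] // _.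
all: by rewrite cats0 -cat1s catA; apply: centered_wrap.
Qed.

Lemma centered_pair_cfg_sound n w : gen centered_pair_cfg n w -> nt_lang n w.
Proof.
move=> H; apply: (@gen_mut _ _ _ (fun n w _ => nt_lang n w) (fun r w _ => rhs_lang r w)) H.
- by move=> m r w0 Hr _; apply: centered_pair_cfg_rule_sound.
- by [].
- by move=> a r w0 _ IH; exists w0.
- by move=> m r w1 w2 _ IH1 _ IH2; exists w1, w2.
Qed.

Lemma gen_ntX a : gen centered_pair_cfg ntX [:: a].
Proof. by apply: (@Gen _ _ _ _ [:: inr a]); [case: a | apply/GensT/GensNil]. Qed.

Lemma gen_centered c w :
  centered c w -> gen centered_pair_cfg (if c then ntB else ntA) w.
Proof.
case=> u [v [Hs ->]]; elim: u v Hs => [|a u IH] v Hs.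
  case: v Hs => // _; apply: (@Gen _ _ _ _ [:: inr c]); first by case: (c).
  exact/GensT/GensNil.
case/lastP: v Hs => [//|v b]; rewrite size_rcons => -[Hs].
apply: (@Gen _ _ _ _ [:: inl ntX; inl (if c then ntB else ntA); inl ntX]).
  by case: (c).
have -> : (a :: u) ++ c :: rcons v b = [:: a] ++ (u ++ c :: v) ++ [:: b] ++ [::].
  by rewrite cats0 /= -cats1 -catA.
by apply: GensN (gen_ntX a) _; apply: GensN (IH _ Hs) _; apply/GensN/GensNil/gen_ntX.
Qed.

Lemma centered_pair_cfg_lang w : cfg_lang centered_pair_cfg w <-> centered_pair w.
Proof.
rewrite -gen_start_lang; split; first exact: centered_pair_cfg_sound.
case=> y [z [-> Hy Hz]]; apply: (@Gen _ _ _ _ [:: inl ntA; inl ntB]) => //.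
by rewrite -[z]cats0; apply/(GensN (gen_centered Hy))/GensN/GensNil/(gen_centered Hz).
Qed.

Lemma centered_pairP x k : size x = k + k ->
  centered_pair x <-> exists2 p, p < k & ~~ nth false x p && nth false x (p + k).
Proof.
move=> Hx; split.
  case=> y [z [Ex [u [v [Huv Ey]]] [u' [v' [Huv' Ez]]]]]; subst x y z.
  move: Hx; rewrite !size_cat /= => Hx.
  exists (size u); first lia.
  rewrite -catA nth_cat ltnn subnn /= nth_cat ltnNge leq_addr /= addnC addnK.
  have -> : k = (size v + size u').+1 by lia.
  by rewrite /= catA nth_cat size_cat ltnn subnn.
case=> p Hp /andP[/negbTE Hp0 Hpk].
set z := drop (p + p.+1) x.
exists (take p x ++ false :: take p (drop p.+1 x)), z; split.
- rewrite -catA /= -{1}(cat_take_drop p x) (drop_nth false) ?Hp0; last lia.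
  by rewrite -{1}(cat_take_drop p (drop p.+1 x)) drop_drop.
- exists (take p x), (take p (drop p.+1 x)).
  by rewrite !size_takel ?size_drop //; lia.
have Hz : size z = (k - p).-1 + (k - p) by rewrite size_drop; lia.
have Ez : nth false z (k - p).-1 = true by rewrite nth_drop -Hpk; congr nth; lia.
exists (take (k - p).-1 z), (drop (k - p) z); split.
  by rewrite size_takel ?size_drop; lia.
have -> : k - p = (k - p).-1.+1 by lia.
by rewrite -Ez -drop_nth ?cat_take_drop //; lia.
Qed.

Lemma not_centered_pair_nth x k p : size x = k + k -> ~ centered_pair x ->
  p < k -> nth false x (p + k) ==> nth false x p.
Proof.
move=> Hx Nx Hp; apply/implyP => Hpk; apply/negPn/negP => Hp0.
by apply: Nx; apply/(centered_pairP Hx); exists p; rewrite // Hp0 Hpk.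
Qed.

Lemma nth_square (w : seq bool) j :
  j < size w + size w -> nth false (w ++ w) j = nth false w (j %% size w).
Proof.
move=> Hj; rewrite nth_cat; case: ltnP => H; first by rewrite modn_small.
by rewrite -{2}(subnK H) modnDr modn_small // ltn_subLR.
Qed.

Lemma square_not_centered_pair (w : seq bool) : ~ centered_pair (w ++ w).
Proof.
move=> /(centered_pairP (size_cat w w)) [p Hp].
rewrite !nth_square ?modnDr ?(modn_small Hp) ?andNb // ?ltn_add2r //.
exact: ltn_addr.
Qed.

Lemma take_zip (S T : Type) n (s : seq S) (t : seq T) :
  take n (zip s t) = zip (take n s) (take n t).
Proof. by elim: n s t => [|n IH] [|x s] [|y t] //=; rewrite IH. Qed.

Lemma drop_zip (S T : Type) n (s : seq S) (t : seq T) :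
  drop n (zip s t) = zip (drop n s) (drop n t).
Proof. by elim: n s t => [|n IH] [|x s] [|y t] //=; case: (drop _ _). Qed.

Definition splice (T : Type) (s1 s2 : seq T) i len :=
  take i s1 ++ take len (drop i s2) ++ drop (i + len) s1.

Lemma splice_cat (T : Type) (u1 y1 v1 u2 y2 v2 : seq T) :
  size u1 = size u2 -> size y1 = size y2 ->
  splice (u1 ++ y1 ++ v1) (u2 ++ y2 ++ v2) (size u1) (size y1) = u1 ++ y2 ++ v1.
Proof.
move=> Hu Hy; rewrite /splice take_size_cat // {1}Hu drop_size_cat // Hy.
by rewrite take_size_cat // addnC -drop_drop !drop_size_cat.
Qed.

Lemma size_splice (T : Type) (s1 s2 : seq T) i len :
  size s1 = size s2 -> i + len <= size s1 -> size (splice s1 s2 i len) = size s1.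
Proof. by move=> Hs Hl; rewrite !size_cat !size_takel ?size_drop; lia. Qed.

Lemma nth_splice (T : Type) (x0 : T) s1 s2 i len j :
  size s1 = size s2 -> i + len <= size s1 ->
  nth x0 (splice s1 s2 i len) j =
  if i <= j < i + len then nth x0 s2 j else nth x0 s1 j.
Proof.
move=> Hs Hl; rewrite nth_cat size_takel; last lia.
case: (ltnP j i) => Hji; first by rewrite nth_take.
rewrite nth_cat size_takel ?size_drop; last lia.
case: (ltnP (j - i) len) => Hj.
  by rewrite nth_take // nth_drop subnKC // ifT //; lia.
by rewrite nth_drop ifF; [congr nth | ]; lia.
Qed.

Lemma zip_splice (S T : Type) (s1 s2 : seq S) (t : seq T) i len :
  size s1 = size t -> size s2 = size t ->
  zip (splice s1 s2 i len) t = splice (zip s1 t) (zip s2 t) i len.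
Proof.
move=> H1 H2; rewrite /splice !take_zip !drop_zip.
have Et : t = take i t ++ take len (drop i t) ++ drop (i + len) t.
  by rewrite addnC -drop_drop !cat_take_drop.
by rewrite [in LHS]Et !zip_cat ?take_zip // !size_take ?size_drop ?H1 ?H2.
Qed.

Lemma nth_splice_square (w1 w2 : seq bool) i len q :
  size w1 = size w2 -> i + len <= size w1 + size w1 -> q < size w1 + size w1 ->
  nth false (splice (w1 ++ w1) (w2 ++ w2) i len) q =
  nth false (if i <= q < i + len then w2 else w1) (q %% size w1).
Proof.
move=> Hs Hil Hq; rewrite nth_splice ?size_cat -?Hs //.
case: ifP => _; last exact: nth_square.
by rewrite Hs nth_square // -Hs.
Qed.

(* A window of length at most [size w1] contains at most one position of each
   pair [{q, q + size w1}], so each of the two splices yields one implication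
   between the letters of [w1] and [w2] at [q]. *)
Lemma splice_squares_agree (w1 w2 : seq bool) i len j :
  size w1 = size w2 -> len <= size w1 -> i + len <= size w1 + size w1 ->
  ~ centered_pair (splice (w1 ++ w1) (w2 ++ w2) i len) ->
  ~ centered_pair (splice (w2 ++ w2) (w1 ++ w1) i len) ->
  i <= j < i + len -> nth false w1 (j %% size w1) = nth false w2 (j %% size w1).
Proof.
move=> Hs Hlen Hil N12 N21 Hj; set k := size w1 in Hlen Hil *.
have agree q b : q < k -> (i <= q < i + len) = b -> (i <= q + k < i + len) = ~~ b ->
    nth false w1 q = nth false w2 q.
  move=> Hq Eq Eqk.
  have Hqk : q + k < k + k by rewrite ltn_add2r.
  have Hq2 : q < k + k by apply: ltn_addr.
  have := not_centered_pair_nth _ N12 Hq; have := not_centered_pair_nth _ N21 Hq.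
  rewrite !size_splice ?size_cat -?Hs // => /(_ erefl) + /(_ erefl).
  rewrite !nth_splice_square -?Hs // Eq Eqk modnDr modn_small //.
  by case: b {Eq Eqk}; case: (nth false w1 q); case: (nth false w2 q).
case: (ltnP j k) => Hjk.
  by rewrite modn_small //; apply: (agree _ true) => //; lia.
have Hjk' : j - k < k by lia.
rewrite -(subnK Hjk) modnDr modn_small //; apply: (agree _ false) => //; lia.
Qed.

Lemma exists_exp2_dominates c n : 0 < c ->
  exists2 l, 0 < l & (c * l + c * l).+1 * (c * l + c * l).+1 * n < 2 ^ l.
Proof.
move=> c_gt0; set m := (81 * c ^ 2 * n).+1; exists (4 * m) => //.
have cube_bound : (c * (4 * m) + c * (4 * m)).+1 * (c * (4 * m) + c * (4 * m)).+1 * n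
    < m ^ 3.
  have Hcm : 0 < c * m by rewrite muln_gt0 c_gt0.
  have H9 : (c * (4 * m) + c * (4 * m)).+1 <= 9 * (c * m) by lia.
  apply: leq_ltn_trans (leq_mul (leq_mul H9 H9) (leqnn n)) _.
  rewrite /m; nia.
apply: (ltn_trans cube_bound); rewrite mulnC expnM.
apply: (@leq_ltn_trans ((2 ^ m) ^ 3)).
  by rewrite leq_exp2r // ltnW // ltn_expl.
by rewrite ltn_exp2l // -[1]/(2 ^ 0) ltn_exp2l.
Qed.

Lemma addn_modn_surj i k j : j < k -> exists2 e, e < k & (i + e) %% k = j.
Proof.
move=> Hj; have k_gt0 : 0 < k by lia.
exists ((j + k - i %% k) %% k); first exact: ltn_pmod.
rewrite modnDmr {1}(divn_eq i k) -addnA subnKC; last by rewrite ltnW ?ltn_addl ?ltn_pmod.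
by rewrite modnMDl modnDr modn_small.
Qed.

Section AdviceLowerBound.
Variables (Gamma N : finType) (h : nat -> seq Gamma) (G : cfg N (bool * Gamma)%type).
Hypothesis h_advice : advice h.
Hypothesis G_decides :
  forall x : seq bool, ~ centered_pair x <-> cfg_lang G (zip x (h (size x))).
Variable l : nat.
Hypothesis l_gt0 : 0 < l.

Local Notation k := ((max_rhs_size G).+1 * l).
Local Notation a := (h (k + k)).

Lemma size_zip_square (w : seq bool) : size w = k -> size (zip (w ++ w) a) = k + k.
Proof. by move=> Hw; rewrite size_zip size_cat Hw h_advice minnn. Qed.

Lemma gen_zip_square (w : seq bool) : size w = k -> gen G (start G) (zip (w ++ w) a).
Proof.
move=> Hw; apply/gen_start_lang; rewrite -Hw -size_cat.
exact/G_decides/square_not_centered_pair.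
Qed.

Definition window (w : seq bool) i len (B : N) := exists u y v,
  [/\ zip (w ++ w) a = u ++ y ++ v, size u = i, size y = len, gen G B y &
      forall y', gen G B y' -> gen G (start G) (u ++ y' ++ v)].

Lemma exists_window (w : seq bool) : size w = k ->
  exists i len B, [/\ i + len <= k + k, l <= len <= k & window w i len B].
Proof.
move=> Hw; have Hz := size_zip_square Hw.
have [|u [y [v [B [E Hy HB HP]]]]] := gen_splits_at_subtree l_gt0 (gen_zip_square Hw).
  by rewrite Hz; apply: leq_trans (leq_addr _ _); rewrite leq_pmull.
exists (size u), (size y), B; split => //; last by exists u, y, v.
by rewrite -Hz E !size_cat addnA leq_addr.
Qed.

Lemma window_splice w1 w2 i len B : size w1 = k -> size w2 = k ->
  window w1 i len B -> window w2 i len B ->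
  ~ centered_pair (splice (w1 ++ w1) (w2 ++ w2) i len).
Proof.
move=> Hw1 Hw2 [u1 [y1 [v1 [E1 <- <- _ HP1]]]] [u2 [y2 [v2 [E2 Hu Hy HB2 _]]]].
have Hil : size u1 + size y1 <= k + k.
  by rewrite -(size_zip_square Hw1) E1 !size_cat addnA leq_addr.
apply/G_decides; rewrite size_splice ?size_cat ?Hw1 ?Hw2 //.
apply/gen_start_lang; rewrite zip_splice ?size_cat ?Hw1 ?Hw2 ?h_advice //.
by rewrite E1 E2 splice_cat //; apply: HP1.
Qed.

Lemma window_agree w1 w2 i len B j : size w1 = k -> size w2 = k -> len <= k ->
  window w1 i len B -> window w2 i len B -> i <= j < i + len ->
  nth false w1 (j %% k) = nth false w2 (j %% k).
Proof.
move=> Hw1 Hw2 Hlen W1 W2 Hj.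
have Hil : i + len <= k + k.
  case: W1 => u [y [v [E <- <- _ _]]].
  by rewrite -(size_zip_square Hw1) E !size_cat addnA leq_addr.
rewrite -Hw1; apply: (@splice_squares_agree _ _ i len); rewrite ?Hw1 ?Hw2 //.
  exact: window_splice W1 W2.
exact: window_splice W2 W1.
Qed.

(* [w] is recovered from its window (position, length, nonterminal) and its
   [k - l] letters following the first [l] letters of the window. *)
Lemma window_count : 2 ^ l <= (k + k).+1 * (k + k).+1 * #|N|.
Proof.
have Hlk : l <= k by rewrite leq_pmull.
pose T := ('I_(k + k).+1 * 'I_(k + k).+1 * N)%type.
have Hex (w : k.-tuple bool) : exists t : T,
    window w t.1.1 t.1.2 t.2 /\ l <= t.1.2 <= k.
  have [i [len [B [Hil Hlen W]]]] := exists_window (size_tuple w).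
  exists (inord i, inord len, B); rewrite /= !inordK //; lia.
pose f w := proj1_sig (constructive_indefinite_description _ (Hex w)).
have Hf (w : k.-tuple bool) : window w (f w).1.1 (f w).1.2 (f w).2 /\ l <= (f w).1.2 <= k.
  exact: proj2_sig (constructive_indefinite_description _ (Hex w)).
pose g w := (f w, [ffun e : 'I_(k - l) => nth false w (((f w).1.1 + l + e) %% k)]).
have g_inj : injective g.
  move=> w1 w2 [Ef Eff]; apply/val_inj/(@eq_from_nth _ false); rewrite !size_tuple //.
  move=> j Hj; have [e He <-] := addn_modn_surj (f w1).1.1 Hj.
  case: (ltnP e l) => Hel.
    have [W1 /andP[Hl1 Hlen1]] := Hf w1; have [W2 _] := Hf w2.
    rewrite -Ef in W2; apply: (window_agree (size_tuple _) (size_tuple _) Hlen1 W1 W2).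
    by rewrite leq_addr ltn_add2l (leq_trans Hel).
  have Hel' : e - l < k - l by apply: ltn_sub2r => //; apply: leq_ltn_trans He.
  have := congr1 (fun F : {ffun 'I_(k - l) -> bool} => F (Ordinal Hel')) Eff.
  by rewrite -Ef !ffunE /= -addnA subnKC.
have := leq_card g g_inj; rewrite card_prod card_tuple card_ffun !card_prod.
by rewrite !card_ord card_bool -{1}(subnKC Hlk) expnD leq_pmul2r ?expn_gt0.
Qed.

End AdviceLowerBound.

Lemma centered_pair_CFL : is_CFL centered_pair.
Proof. by exists nonterminal, centered_pair_cfg => w; rewrite centered_pair_cfg_lang. Qed.

Lemma not_centered_pair_not_CFL_n : ~ in_CFL_n (fun x => ~ centered_pair x).
Proof.
case=> Gamma [h [L' [h_advice [[N [G HG]] HL]]]].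
have G_decides x : ~ centered_pair x <-> cfg_lang G (zip x (h (size x))).
  exact: iff_trans (HL x) (HG _).
have [l l_gt0] := exists_exp2_dominates #|N| (ltn0Sn (max_rhs_size G)).
by rewrite ltnNge (window_count h_advice G_decides l_gt0).
Qed.

Theorem proposition4p4 :
  exists (Sigma : finType) (L : language Sigma),
    is_coCFL L /\ ~ in_CFL_n L.
Proof.
exists bool, (fun x => ~ centered_pair x); split; last exact: not_centered_pair_not_CFL_n.
have [N [G HG]] := centered_pair_CFL.
by exists N, G => w; rewrite -HG; split => [/NNPP | Hw /(_ Hw)].
Qed.
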